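(* Let $G_m$ be a chain hexagonal cactus of length $m\ge 2$ with hexagons $h_1,\dots,h_m$ ordered along the chain (consecutive hexagons share a cut-vertex, $h_1$ and $h_m$ terminal). Let $c$ be the cut-vertex shared by $h_{m-1}$ and $h_m$, and label the vertices of $h_{m-1}$ as $a,b,c,i,j,k$ so that its edges are $ab,bc,ci,ij,jk,ka$. Let $H_{m-1}$ be the subgraph of $G_m$ induced by the vertices of $h_1,\dots,h_{m-1}$. Then at least one of the following holds: (i) $2\,\Psi(H_{m-1}-\{b,c\})\ge \Psi(H_{m-1}-c)$; (ii) $2\,\Psi(H_{m-1}-\{c,i\})\ge \Psi(H_{m-1}-c)$.
   Context: A matching of a graph is a set of pairwise vertex-disjoint edges; it is maximal if it is not a proper subset of another matching. $\Psi(G)$ is the number of maximal matchings of $G$. For a vertex set $S$, $G-S$ (or $G-v$ when $S=\{v\}$) is the graph obtained by deleting the vertices of $S$ and all incident edges. A chain hexagonal cactus is a connected graph all of whose blocks are 6-cycles (hexagons), in which each hexagon has at most two cut-vertices and each cut-vertex lies in exactly two hexagons; its length is its number of hexagons; terminal hexagons are those with exactly one cut-vertex. *)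

From mathcomp Require Import all_boot.
Set Implicit Arguments. Unset Strict Implicit. Unset Printing Implicit Defensive.

Section Graphs.
Variable T : finType.

Definition edge_in (e : rel T) (U : {set T}) (f : {set T}) : bool :=
  [exists x, exists y, [&& f == [set x; y], e x y, x \in U & y \in U]].

Definition matching (e : rel T) (U : {set T}) (M : {set {set T}}) : bool :=
  [forall f in M, edge_in e U f] &&
  [forall f in M, forall g in M, (f != g) ==> [disjoint f & g]].

Definition maximal_matching (e : rel T) (U : {set T}) (M : {set {set T}}) : bool :=
  matching e U M &&
  [forall M' : {set {set T}}, (matching e U M' && (M \subset M')) ==> (M' == M)].

Definition Psi (e : rel T) (U : {set T}) : nat :=
  #|[set M : {set {set T}} | maximal_matching e U M]|.

Definition hexV (h : 'I_6 -> T) : {set T} := [set h k | k : 'I_6].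
Definition hex_edge (h : 'I_6 -> T) (x y : T) : bool :=
  [exists k : 'I_6, ((x == h k) && (y == h (ordS k))) ||
                    ((y == h k) && (x == h (ordS k)))].

(* (T,e) is a chain hexagonal cactus of length m with hexagons h 0, ..., h (m-1)
   in chain order: each h t is a 6-cycle, vertices/edges are exactly those of
   the hexagons, consecutive hexagons share exactly one vertex, and
   non-consecutive hexagons are vertex-disjoint. *)
Definition chain_hex_cactus (e : rel T) (m : nat) (h : nat -> 'I_6 -> T) : Prop :=
  [/\ forall t, t < m -> injective (h t),
      forall x : T, exists2 t, t < m & x \in hexV (h t),
      forall x y : T, e x y <-> exists2 t, t < m & hex_edge (h t) x y
    & forall s t, s < t -> t < m ->
        #|hexV (h s) :&: hexV (h t)| = (if t == s.+1 then 1 else 0)].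
End Graphs.

From mathcomp Require Import all_boot zify.
Set Implicit Arguments. Unset Strict Implicit. Unset Printing Implicit Defensive.

(* If the only neighbour of v is w, a maximal matching of G either avoids the
   edge vw, and is then a maximal matching of G - v, or contains it, and is
   then recovered from a maximal matching N of G - v as vw plus the edges of N
   not at w; hence Psi(G) <= 2 Psi(G - v).  The last hexagon of H shares at
   most one vertex with the earlier hexagons, so one of the two neighbours b, i
   of c lies in no other hexagon; in H - c it is pendant, and the inequality
   for G = H - c, v = b (resp. i) is the claim. *)

Section Matchings.
Variables (T : finType) (e : rel T).

Lemma edge_inP (U : {set T}) (f : {set T}) :
  reflect (exists x y, [/\ f = [set x; y], e x y, x \in U & y \in U])
          (edge_in e U f).
Proof.
apply: (iffP existsP) => [[x /existsP[y /and4P[/eqP fE exy xU yU]]]|].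
  by exists x, y.
case=> x [y [fE exy xU yU]].
by exists x; apply/existsP; exists y; rewrite fE eqxx exy xU yU.
Qed.

Lemma edge_in_setD1 (U : {set T}) (v : T) (f : {set T}) :
  edge_in e (U :\ v) f = edge_in e U f && (v \notin f).
Proof.
apply/edge_inP/andP => [[x [y [fE exy]]]|[/edge_inP[x [y [fE exy xU yU]]]]].
  rewrite fE !inE => /andP[vx xU] /andP[vy yU].
  by split; [apply/edge_inP; exists x, y | rewrite negb_or ![v == _]eq_sym vx vy].
rewrite fE !inE negb_or => /andP[vx vy].
by exists x, y; rewrite !inE ![_ == v]eq_sym vx vy.
Qed.

Lemma edge_in_meets_self (U : {set T}) (f : {set T}) :
  edge_in e U f -> ~~ [disjoint f & f].
Proof.
case/edge_inP=> x [y [fE _ _ _]]; have xf : x \in f by rewrite fE set21.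
by apply/negP => /disjointFr/(_ xf); rewrite xf.
Qed.

Lemma matchingP (U : {set T}) (M : {set {set T}}) :
  reflect ((forall f, f \in M -> edge_in e U f) /\
           (forall f g, f \in M -> g \in M -> f != g -> [disjoint f & g]))
          (matching e U M).
Proof.
apply: (iffP andP) => [[/forall_inP edgeM /forall_inP disjM]|[edgeM disjM]].
  by split=> // f g fM gM; move/forall_inP: (disjM f fM) => /(_ g gM)/implyP.
split; apply/forall_inP => // f fM; apply/forall_inP => g gM.
exact/implyP/disjM.
Qed.

Lemma matching_setU1 (U : {set T}) (M : {set {set T}}) (f : {set T}) :
  matching e U M -> edge_in e U f -> (forall g, g \in M -> [disjoint f & g]) ->
  matching e U (f |: M).
Proof.
move=> /matchingP[edgeM disjM] ef disjf; apply/matchingP; split.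
  by move=> g /setU1P[->|/edgeM].
move=> g1 g2 /setU1P[->|g1M] /setU1P[->|g2M]; rewrite ?eqxx // => g12.
- exact: disjf.
- by rewrite disjoint_sym disjf.
- exact: disjM.
Qed.

Lemma maximal_matchingP (U : {set T}) (M : {set {set T}}) :
  matching e U M ->
  reflect (forall f, edge_in e U f -> exists2 g, g \in M & ~~ [disjoint f & g])
          (maximal_matching e U M).
Proof.
move=> mM; apply: (iffP idP) => [/andP[_ /forallP maxM] f ef|dom].
  have [/forall_inP disjf|] := boolP [forall g in M, [disjoint f & g]].
    have := maxM (f |: M).
    rewrite (matching_setU1 mM ef disjf) subsetUr /= => /eqP fME.
    have fM : f \in M by rewrite -fME setU11.
    by move: (disjf f fM); rewrite (negbTE (edge_in_meets_self ef)).
  by move/forall_inPn.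
apply/andP; split=> //; apply/forallP => M'; apply/implyP => /andP[mM' MM'].
rewrite eqEsubset MM' andbT; apply/subsetP => f fM'.
have /matchingP[edgeM' disjM'] := mM'.
have [g gM fg] := dom f (edgeM' f fM').
have [-> //|f_neq_g] := eqVneq f g.
by rewrite disjM' // (subsetP MM') in fg.
Qed.

Lemma matching_extend (U : {set T}) (M : {set {set T}}) :
  matching e U M -> exists2 N, maximal_matching e U N & M \subset N.
Proof.
move=> mM; pose P N := matching e U N && (M \subset N).
have PM : P M by rewrite /P mM subxx.
case: (@arg_maxnP _ M P (fun N => #|N|) PM) => N /andP[mN MN] Nmax.
exists N => //; apply/andP; split=> //; apply/forallP => N'.
apply/implyP => /andP[mN' NN']; rewrite eq_sym eqEcard NN' /=; apply: Nmax.
by rewrite /P mN' (subset_trans MN NN').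
Qed.

Section Pendant.
Variables (U : {set T}) (v w : T).
Hypothesis pendant : forall y, y \in U -> e v y || e y v -> y = w.

Lemma pendant_edge f : edge_in e U f -> v \in f -> f = [set v; w].
Proof.
case/edge_inP=> x [y [-> exy xU yU]] /set2P[vx|vy].
  by rewrite -vx (pendant yU) // vx exy.
by rewrite setUC -vy (pendant xU) // vy exy orbT.
Qed.

Lemma maximal_matching_setD1 M :
  maximal_matching e U M -> [set v; w] \notin M -> maximal_matching e (U :\ v) M.
Proof.
move=> maxM vwM; have mM : matching e U M by case/andP: maxM.
have /matchingP[edgeM disjM] := mM.
have mM' : matching e (U :\ v) M.
  apply/matchingP; split=> // f fM; rewrite edge_in_setD1 edgeM //=.
  by apply/negP => /(pendant_edge (edgeM f fM)) fE; rewrite -fE fM in vwM.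
apply/(maximal_matchingP mM') => f; rewrite edge_in_setD1 => /andP[ef _].
exact: (elimT (maximal_matchingP mM) maxM).
Qed.

Lemma maximal_matching_pendant M :
  maximal_matching e U M -> [set v; w] \in M ->
  exists2 N, maximal_matching e (U :\ v) N &
             M = [set v; w] |: [set f in N | w \notin f].
Proof.
move=> maxM vwM; have mM : matching e U M by case/andP: maxM.
have /matchingP[edgeM disjM] := mM.
pose M' := M :\ [set v; w].
have off_vw f : f \in M' -> (v \notin f) && (w \notin f).
  case/setD1P=> f_neq fM; have /disjM/(_ vwM f_neq) dj := fM.
  by rewrite (disjointFl dj (set21 v w)) (disjointFl dj (set22 v w)).
have mM' : matching e (U :\ v) M'.
  apply/matchingP; split=> [f fM'|f g /setD1P[_ fM] /setD1P[_ gM]]; last exact: disjM.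
  rewrite edge_in_setD1 edgeM; last by case/setD1P: fM'.
  by case/andP: (off_vw f fM').
have free_at_w f : edge_in e (U :\ v) f ->
    (forall g, g \in M' -> [disjoint f & g]) -> w \in f.
  rewrite edge_in_setD1 => /andP[ef vf] disjf.
  have [g gM meet] := elimT (maximal_matchingP mM) maxM f ef.
  have [gE|g_neq] := eqVneq g [set v; w]; last by rewrite disjf ?inE ?g_neq in meet.
  apply: contraR meet; rewrite gE => wf; rewrite -setI_eq0; apply/eqP/setP => x.
  by rewrite !inE; apply/andP => -[xf /orP[]/eqP xE]; subst x; rewrite xf in vf wf.
have [N maxN M'N] := matching_extend mM'.
exists N => //; rewrite -[LHS](setD1K vwM); congr (_ |: _); apply/setP => f.
rewrite inE; apply/idP/andP => [fM'|[fN wf]].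
  by rewrite (subsetP M'N) //; case/andP: (off_vw f fM').
apply: contraNT wf => fM'; have /andP[/matchingP[edgeN disjN] _] := maxN.
apply: free_at_w (edgeN f fN) _ => g gM'.
by apply: disjN fN (subsetP M'N g gM') _; apply: contraNneq fM' => ->.
Qed.

Lemma Psi_pendant : Psi e U <= 2 * Psi e (U :\ v).
Proof.
rewrite /Psi; set S := [set M | maximal_matching e U M].
set S' := [set N | maximal_matching e (U :\ v) N].
rewrite -(cardsID [set M : {set {set T}} | [set v; w] \in M] S) mul2n -addnn.
apply: leq_add.
  pose r (N : {set {set T}}) := [set v; w] |: [set f in N | w \notin f].
  apply: leq_trans (leq_imset_card r S'); apply/subset_leq_card/subsetP => M.
  rewrite !inE => /andP[maxM vwM].
  have [N maxN ->] := maximal_matching_pendant maxM vwM.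
  by apply: imset_f; rewrite inE.
apply/subset_leq_card/subsetP => M; rewrite !inE => /andP[vwM maxM].
exact: maximal_matching_setD1.
Qed.

End Pendant.
End Matchings.

Section Hexagons.
Variable T : finType.

Lemma hex_edge_sym (h0 : 'I_6 -> T) x y : hex_edge h0 x y = hex_edge h0 y x.
Proof. by apply/existsP/existsP => -[k hk]; exists k; rewrite orbC. Qed.

Lemma mem_hexV (h0 : 'I_6 -> T) k : h0 k \in hexV h0.
Proof. exact: imset_f. Qed.

Lemma hex_edge_memV (h0 : 'I_6 -> T) x y : hex_edge h0 x y -> x \in hexV h0.
Proof. by case/existsP=> k /orP[]/andP[] => [/eqP-> _|_ /eqP->]; apply: mem_hexV. Qed.

Lemma hex_edge_at (h0 : 'I_6 -> T) q y : injective h0 ->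
  hex_edge h0 (h0 q) y = (y == h0 (ordS q)) || (y == h0 (ord_pred q)).
Proof.
move=> h0_inj; apply/existsP/orP => [[k /orP[]/andP[/eqP E1 /eqP E2]]|].
- by left; rewrite E2 (h0_inj _ _ E1).
- by right; rewrite E1 (h0_inj _ _ E2) ordSK.
case=> /eqP->; first by exists q; rewrite !eqxx.
by exists (ord_pred q); rewrite ord_predK !eqxx orbT.
Qed.

End Hexagons.

Section ChainHexCactus.
Variables (T : finType) (e : rel T) (m : nat) (h : nat -> 'I_6 -> T).
Hypothesis cactus : chain_hex_cactus e m h.

Lemma hexV_meet s t x : s < t -> t < m ->
  x \in hexV (h s) -> x \in hexV (h t) ->
  hexV (h s) :&: hexV (h t) = [set x] /\ t = s.+1.
Proof.
move=> st tm xs xt; have [_ _ _ card_meet] := cactus.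
have xI : x \in hexV (h s) :&: hexV (h t) by rewrite inE xs xt.
move: (card_meet s t st tm); case: eqP => [tE /eqP/cards1P[z zE]|_ /cards0_eq I0].
  by split=> //; move: xI; rewrite zE => /set1P->.
by rewrite I0 inE in xI.
Qed.

Lemma hexV_only t q : t < m ->
  (forall s, s < t -> h t q \notin hexV (h s)) ->
  (t.+1 < m -> h t q \notin hexV (h t.+1)) ->
  forall s, s < m -> h t q \in hexV (h s) -> s = t.
Proof.
move=> tm early late s sm qs; case: (ltngtP s t) => [st|ts|//].
  by rewrite (negbTE (early s st)) in qs.
have [_ sE] := hexV_meet ts sm (mem_hexV _ _) qs; subst s.
by rewrite (negbTE (late sm)) in qs.
Qed.

Lemma hexV_earlier t x y : t < m -> x \in hexV (h t) -> y \in hexV (h t) -> x != y ->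
  (forall s, s < t -> x \notin hexV (h s)) \/
  (forall s, s < t -> y \notin hexV (h s)).
Proof.
move=> tm xt yt xy.
have [/existsP[s xs]|nx] := boolP [exists s : 'I_t, x \in hexV (h s)];
  [right|left] => s' s't; apply/negP.
  move=> ys'; have [xI tE] := hexV_meet (ltn_ord s) tm xs xt.
  have [_ tE'] := hexV_meet s't tm ys' yt.
  have ss' : s' = s by lia.
  have : y \in [set x] by rewrite -xI inE -ss' ys' yt.
  by move/set1P => yx; rewrite yx eqxx in xy.
by move=> xs'; move/negP: nx; apply; apply/existsP; exists (Ordinal s't).
Qed.

Lemma cactus_neighbour t q y : t < m ->
  (forall s, s < m -> h t q \in hexV (h s) -> s = t) ->
  e (h t q) y || e y (h t q) -> (y == h t (ordS q)) || (y == h t (ord_pred q)).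
Proof.
move=> tm only exy; have [h_inj _ edges _] := cactus.
have [s sm hs] : exists2 s, s < m & hex_edge (h s) (h t q) y.
  by case/orP: exy => /edges[s sm hs]; exists s; rewrite // hex_edge_sym.
have st := only s sm (hex_edge_memV hs); subst s.
by rewrite -(hex_edge_at _ _ (h_inj t tm)).
Qed.

Lemma Psi_hexV_only t q (U : {set T}) : t < m ->
  (forall s, s < m -> h t q \in hexV (h s) -> s = t) ->
  (h t (ordS q) \notin U) || (h t (ord_pred q) \notin U) ->
  Psi e U <= 2 * Psi e (U :\ h t q).
Proof.
move=> tm only /orP[gone|gone].
  apply: (Psi_pendant (w := h t (ord_pred q))) => y yU.
  by move/(cactus_neighbour tm only)/orP => [/eqP yE|/eqP //]; rewrite -yE yU in gone.
apply: (Psi_pendant (w := h t (ordS q))) => y yU.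
by move/(cactus_neighbour tm only)/orP => [/eqP //|/eqP yE]; rewrite -yE yU in gone.
Qed.

End ChainHexCactus.

Theorem lemma3p11 (T : finType) (e : rel T) (m : nat) (h : nat -> 'I_6 -> T)
  (p : 'I_6) :
  2 <= m -> chain_hex_cactus e m h ->
  h (m - 2) p \in hexV (h (m - 1)) ->
  let H := \bigcup_(t < m.-1) hexV (h t) in
  let c := h (m - 2) p in
  let b := h (m - 2) (ord_pred p) in
  let i := h (m - 2) (ordS p) in
  Psi e (H :\ c) <= 2 * Psi e (H :\: [set b; c]) \/
  Psi e (H :\ c) <= 2 * Psi e (H :\: [set c; i]).
Proof.
move=> m2 cactus cm H c b i.
have [h_inj _ _ _] := cactus.
have tm : m - 2 < m by lia.
have t1m : (m - 2).+1 < m by lia.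
rewrite (_ : m - 1 = (m - 2).+1) in cm; last by lia.
have [c_meet _] := hexV_meet cactus (ltnSn _) t1m (mem_hexV _ p) cm.
have only q : q != p -> (forall s, s < m - 2 -> h (m - 2) q \notin hexV (h s)) ->
    forall s, s < m -> h (m - 2) q \in hexV (h s) -> s = m - 2.
  move=> qp early; apply: (hexV_only cactus tm early) => _.
  apply: contra qp => q_next.
  have : h (m - 2) q \in [set c] by rewrite -c_meet inE mem_hexV q_next.
  by move/set1P/(h_inj _ tm)->.
have [pred_p succ_p pred_succ] : [/\ ord_pred p != p, ordS p != p & ord_pred p != ordS p].
  by case: p {cm c_meet only c b i} => [[|[|[|[|[|[|?]]]]]] ?].
have b_neq_i : b != i by rewrite (inj_eq (h_inj _ tm)).
have [early_b|early_i] := hexV_earlier cactus tm (mem_hexV _ _) (mem_hexV _ _) b_neq_i.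
  left; have -> : H :\: [set b; c] = H :\ c :\ b by rewrite setDDl setUC.
  by apply: (Psi_hexV_only cactus tm (only _ pred_p early_b)); rewrite ord_predK /c setD11.
right; have -> : H :\: [set c; i] = H :\ c :\ i by rewrite setDDl.
by apply: (Psi_hexV_only cactus tm (only _ succ_p early_i)); rewrite ordSK /c setD11 orbT.
Qed.
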